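(* Let $x,y>0$, let $\theta\in(0,\frac{\pi}{2})$, and let $\mathbf z=(xy\cos\theta,x^2,y^2)$. For $\theta\in(0,\arccos\frac{2}{\pi})$ let $\beta_0\in(1,\infty)$ be the unique solution of $$\arccos\left(\frac{-1}{\beta_0}\right)=\frac{(\beta_0-\cos\theta)\sqrt{\beta_0^2-1}}{\beta_0(\beta_0\cos\theta-1)}.$$ Let $\Lambda^*_+$ be as defined in the context. Then the following hold. - If $\theta\in(0,\arccos\frac{2}{\pi})$, then $\Lambda^*_+(\mathbf z)=\frac{x^2}{2}+\frac{y^2}{2}-1-\ln(xy)+\ln\left(\frac{\pi\beta_0(\beta_0\cos\theta-1)}{2(\beta_0-\cos\theta)^2}\right)$. - If $\theta\in[\arccos\frac{2}{\pi},\frac{\pi}{2})$, then $\Lambda^*_+(\mathbf z)=\frac{x^2}{2}+\frac{y^2}{2}-1-\ln(xy)$.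
   Context: For $\boldsymbol\lambda=(\lambda_1,\lambda_2,\lambda_3)\in\mathbb{R}^3$ let $D=\lambda_1^2-(1-2\lambda_2)(1-2\lambda_3)$, and let $$S=\{\boldsymbol\lambda:\lambda_2<\tfrac12,\ \lambda_3<\tfrac12,\ D<0\}.$$ For $\boldsymbol\lambda\in S$ put $$\Lambda(\boldsymbol\lambda)=\ln\left(\pi+2\arctan\left(\frac{\lambda_1}{\sqrt{-D}}\right)\right)-\ln\pi-\tfrac12\ln(-D).$$ This is the log moment generating function of $(\hat X\hat Y,\hat X^2,\hat Y^2)$ for independent half-normal $\hat X,\hat Y$. Define $$\Lambda^*_+(\mathbf z)=\sup_{\boldsymbol\lambda\in S,\ \lambda_1>0}\{\langle\boldsymbol\lambda,\mathbf z\rangle-\Lambda(\boldsymbol\lambda)\}.$$ *)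

From Stdlib Require Import Reals.
From Coquelicot Require Import Coquelicot.
Open Scope R_scope.

Definition Dlam (l1 l2 l3 : R) : R := l1 ^ 2 - (1 - 2 * l2) * (1 - 2 * l3).

Definition inS (l1 l2 l3 : R) : Prop :=
  l2 < 1 / 2 /\ l3 < 1 / 2 /\ Dlam l1 l2 l3 < 0.

(* log moment generating function, meaningful on S *)
Definition Lam (l1 l2 l3 : R) : R :=
  ln (PI + 2 * atan (l1 / sqrt (- Dlam l1 l2 l3))) - ln PI
  - (1 / 2) * ln (- Dlam l1 l2 l3).

Definition LamStarPlus (z1 z2 z3 : R) : Rbar :=
  Lub_Rbar (fun v => exists l1 l2 l3 : R,
    inS l1 l2 l3 /\ 0 < l1 /\
    v = l1 * z1 + l2 * z2 + l3 * z3 - Lam l1 l2 l3).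

Definition beta0_eq (theta b : R) : Prop :=
  acos (-1 / b) = (b - cos theta) * sqrt (b ^ 2 - 1) / (b * (b * cos theta - 1)).

(* Write c = cos theta and parametrize the admissible lambda by polar coordinates
   lambda1 = - K cos t, 1 - 2 lambda2 = K s, 1 - 2 lambda3 = K / s with K, s > 0 and
   t in (PI/2, PI); then Lambda = ln (2 t / PI) - ln (K sin t).  For fixed t the
   supremum over K and s is computed by AM-GM and ln q <= q - 1, which leaves
   Lambda^*_+(z) = x^2/2 + y^2/2 - 1 - ln (x y) + sup_t g(t) with
   g(t) = ln (PI sin t / (2 t (1 + c cos t))).  The sign of g' is that of
   N(t) = t (c + cos t) - sin t (1 + c cos t), and N' = sin t (2 c sin t - t), so N rises
   and then falls on [PI/2, PI], with N(PI/2) = PI/2 (c - 2/PI) and N(PI) < 0.  If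
   c <= 2/PI, g decreases and its supremum g(PI/2) = 0 is not attained; otherwise g
   peaks at the unique root p of N, and beta0 = -1 / cos p turns N(p) = 0 into the
   defining equation of beta0 and g(p) into the stated logarithm. *)

From Stdlib Require Import Reals Lra.
From Coquelicot Require Import Coquelicot.
Open Scope R_scope.

Lemma PI_gt_3 : 3 < PI.
Proof. generalize PI2_3_2; lra. Qed.

Lemma two_div_PI_bounds : 0 < 2 / PI < 1.
Proof.
  assert (hpi := PI_gt_3).
  split; [apply Rdiv_lt_0_compat | apply (Rmult_lt_reg_r PI); [| field_simplify]]; lra.
Qed.

Lemma ln_le_sub_1 q : 0 < q -> ln q <= q - 1.
Proof. intros hq. generalize (exp_ineq1_le (ln q)). rewrite exp_ln by exact hq. lra. Qed.

Lemma sin_sq_add_cos_sq t : sin t ^ 2 + cos t ^ 2 = 1.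
Proof. rewrite <- (sin2_cos2 t). unfold Rsqr. ring. Qed.

Lemma lt_of_derive_pos (f f' : R -> R) a b : a < b ->
  (forall t, a <= t <= b -> is_derive f t (f' t)) ->
  (forall t, a < t < b -> 0 < f' t) -> f a < f b.
Proof.
  intros hab hd hpos.
  destruct (MVT_cor2 f f' a b hab (fun t ht => proj1 (is_derive_Reals _ _ _) (hd t ht)))
    as [t [hmvt ht]].
  specialize (hpos t ht). nra.
Qed.

Lemma lt_of_derive_neg (f f' : R -> R) a b : a < b ->
  (forall t, a <= t <= b -> is_derive f t (f' t)) ->
  (forall t, a < t < b -> f' t < 0) -> f b < f a.
Proof.
  intros hab hd hneg.
  enough (- f a < - f b) by lra.
  apply (lt_of_derive_pos (fun t => - f t) (fun t => - f' t) a b hab).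
  - intros t ht. exact (is_derive_opp f t _ (hd t ht)).
  - intros t ht. specialize (hneg t ht). lra.
Qed.

Lemma le_of_derive_sign_change (f f' : R -> R) a p b : a <= p <= b ->
  (forall t, a <= t <= b -> is_derive f t (f' t)) ->
  (forall t, a < t < p -> 0 < f' t) ->
  (forall t, p < t < b -> f' t < 0) ->
  forall t, a <= t <= b -> f t <= f p.
Proof.
  intros hp hd hinc hdec t ht.
  destruct (Rtotal_order t p) as [h | [-> | h]].
  - left. apply (lt_of_derive_pos f f'); [lra | |]; intros; [apply hd | apply hinc]; lra.
  - lra.
  - left. apply (lt_of_derive_neg f f'); [lra | |]; intros; [apply hd | apply hdec]; lra.
Qed.

Lemma Lub_Rbar_eq_approx (E : R -> Prop) M :
  (forall v, E v -> v <= M) ->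
  (forall eps, 0 < eps -> exists v, E v /\ M - eps < v) ->
  Lub_Rbar E = Finite M.
Proof.
  intros hub happ. apply is_lub_Rbar_unique. split; [exact hub |].
  intros [l | |] hl; simpl; trivial.
  - destruct (Rle_or_lt M l) as [h | h]; [exact h |].
    destruct (happ (M - l)) as [v [hv hlt]]; [lra |].
    specialize (hl v hv). simpl in hl. lra.
  - destruct (happ 1 Rlt_0_1) as [v [hv _]]. exact (hl v hv).
Qed.

Lemma Dlam_polar K s t : s <> 0 ->
  Dlam (- K * cos t) ((1 - K * s) / 2) ((1 - K / s) / 2) = - (K * sin t) ^ 2.
Proof.
  intros hs. unfold Dlam.
  replace ((1 - 2 * ((1 - K * s) / 2)) * (1 - 2 * ((1 - K / s) / 2)))
    with (K ^ 2 * (sin t ^ 2 + cos t ^ 2)) by (rewrite sin_sq_add_cos_sq; field; exact hs).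
  ring.
Qed.

Lemma polar_inS K s t : 0 < K -> 0 < s -> PI / 2 < t < PI ->
  inS (- K * cos t) ((1 - K * s) / 2) ((1 - K / s) / 2) /\ 0 < - K * cos t.
Proof.
  intros hK hs ht.
  assert (hsin : 0 < sin t) by (apply sin_gt_0; lra).
  assert (hcos : cos t < 0) by (apply cos_lt_0; lra).
  assert (hKs : 0 < K / s) by (apply Rdiv_lt_0_compat; assumption).
  unfold inS. rewrite Dlam_polar by lra.
  assert (0 < (K * sin t) ^ 2) by (apply pow_lt; nra).
  repeat split; nra.
Qed.

Lemma Lam_polar K s t : 0 < K -> s <> 0 -> 0 < t < PI ->
  Lam (- K * cos t) ((1 - K * s) / 2) ((1 - K / s) / 2)
  = ln (2 * t) - ln PI - ln (K * sin t).
Proof.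
  intros hK hs ht.
  assert (hsin : 0 < sin t) by (apply sin_gt_0; lra).
  assert (hKsin : 0 < K * sin t) by nra.
  unfold Lam. rewrite Dlam_polar, Ropp_involutive, sqrt_pow2 by lra.
  replace (- K * cos t / (K * sin t)) with (tan (t - PI / 2)).
  2: { unfold tan. rewrite sin_minus, cos_minus, sin_PI2, cos_PI2. field. lra. }
  rewrite atan_tan by lra.
  replace (PI + 2 * (t - PI / 2)) with (2 * t) by field.
  rewrite ln_pow by exact hKsin. simpl INR. field.
Qed.

Lemma inS_polar l1 l2 l3 : inS l1 l2 l3 -> 0 < l1 ->
  exists K s t, 0 < K /\ 0 < s /\ PI / 2 < t < PI /\
    l1 = - K * cos t /\ l2 = (1 - K * s) / 2 /\ l3 = (1 - K / s) / 2.
Proof.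
  intros [hl2 [hl3 hD]] hl1. unfold Dlam in hD.
  set (a := 1 - 2 * l2) in hD. set (b := 1 - 2 * l3) in hD.
  set (E := a * b - l1 ^ 2).
  assert (hE : 0 < E) by (unfold E; lra).
  assert (hsE : 0 < sqrt E) by (apply sqrt_lt_R0; exact hE).
  set (r := l1 / sqrt E).
  assert (hr : 0 < atan r < PI / 2).
  { split; [rewrite <- atan_0; apply atan_increasing | apply atan_bound].
    apply Rdiv_lt_0_compat; assumption. }
  assert (hca : 0 < cos (atan r)) by (apply cos_gt_0; lra).
  assert (hsa : sin (atan r) = r * cos (atan r)).
  { rewrite <- (tan_atan r) at 2. unfold tan. field. lra. }
  set (K := sqrt E / cos (atan r)).
  assert (hK : 0 < K) by (apply Rdiv_lt_0_compat; assumption).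
  (* K^2 = E (1 + r^2) = E + l1^2 = a b *)
  assert (hK2 : K * K = a * b).
  { assert (hc2 : cos (atan r) ^ 2 * (1 + r ^ 2) = 1).
    { rewrite <- (sin_sq_add_cos_sq (atan r)) at 2. rewrite hsa. ring. }
    assert (hr2 : r ^ 2 * E = l1 ^ 2).
    { unfold r. rewrite <- (sqrt_sqrt E) at 2 by lra. field. lra. }
    assert (hab : a * b = E + r ^ 2 * E) by (rewrite hr2; unfold E; ring).
    rewrite hab. unfold K.
    replace (sqrt E / cos (atan r) * (sqrt E / cos (atan r)))
      with (sqrt E * sqrt E / cos (atan r) ^ 2) by (field; lra).
    rewrite sqrt_sqrt by lra.
    replace (E + r ^ 2 * E) with (E * (cos (atan r) ^ 2 * (1 + r ^ 2)) / cos (atan r) ^ 2)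
      by (field; lra).
    rewrite hc2. field. lra. }
  assert (ha : 0 < a) by (unfold a; lra).
  exists K, (a / K), (PI / 2 + atan r).
  repeat split; try lra.
  - apply Rdiv_lt_0_compat; assumption.
  - rewrite cos_plus, sin_PI2, cos_PI2, hsa. unfold K.
    replace l1 with (r * sqrt E) at 1 by (unfold r; field; lra). field. lra.
  - unfold a. field. lra.
  - replace (K / (a / K)) with (K * K / a) by (field; lra).
    rewrite hK2. unfold b. field. lra.
Qed.

Definition base_value (x y : R) : R := x ^ 2 / 2 + y ^ 2 / 2 - 1 - ln (x * y).

Definition gain (c t : R) : R := ln PI + ln (sin t) - ln (2 * t) - ln (1 + c * cos t).

Lemma one_add_mul_cos_pos c t : 0 < c < 1 -> 0 < 1 + c * cos t.
Proof. intros hc. destruct (COS_bound t). nra. Qed.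

Lemma objective_polar x y c K s t : 0 < x -> 0 < y -> 0 < c < 1 ->
  0 < K -> s <> 0 -> 0 < t < PI ->
  (- K * cos t) * (x * y * c) + (1 - K * s) / 2 * x ^ 2 + (1 - K / s) / 2 * y ^ 2
  - Lam (- K * cos t) ((1 - K * s) / 2) ((1 - K / s) / 2)
  = base_value x y + gain c t - K * (s * x - y) ^ 2 / (2 * s)
    - (K * (x * y) * (1 + c * cos t) - 1 - ln (K * (x * y) * (1 + c * cos t))).
Proof.
  intros hx hy hc hK hs ht.
  assert (hsin : 0 < sin t) by (apply sin_gt_0; lra).
  assert (hcos := one_add_mul_cos_pos c t hc).
  assert (hxy : 0 < x * y) by nra.
  rewrite Lam_polar by assumption.
  unfold base_value, gain.
  rewrite !ln_mult by nra.
  field. exact hs.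
Qed.

Lemma LamStarPlus_eq_base_add_sup x y c M : 0 < x -> 0 < y -> 0 < c < 1 ->
  (forall t, PI / 2 < t < PI -> gain c t <= M) ->
  (forall eps, 0 < eps -> exists t, PI / 2 < t < PI /\ M - eps < gain c t) ->
  LamStarPlus (x * y * c) (x ^ 2) (y ^ 2) = Finite (base_value x y + M).
Proof.
  intros hx hy hc hub happ.
  unfold LamStarPlus. apply Lub_Rbar_eq_approx.
  - intros v [l1 [l2 [l3 [hS [hl1 ->]]]]].
    destruct (inS_polar l1 l2 l3 hS hl1) as [K [s [t [hK [hs [ht [-> [-> ->]]]]]]]].
    rewrite objective_polar by (assumption || lra).
    assert (hq : 0 < K * (x * y) * (1 + c * cos t)).
    { apply Rmult_lt_0_compat; [apply Rmult_lt_0_compat; nra | apply one_add_mul_cos_pos, hc]. }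
    generalize (ln_le_sub_1 _ hq) (hub t ht).
    assert (0 <= K * (s * x - y) ^ 2 / (2 * s)).
    { apply Rdiv_le_0_compat; [apply Rmult_le_pos; [lra | apply pow2_ge_0] | lra]. }
    lra.
  - intros eps heps. destruct (happ eps heps) as [t [ht hgt]].
    exists (base_value x y + gain c t). split; [| lra].
    assert (hcos := one_add_mul_cos_pos c t hc).
    (* the optimal dual point: equality in AM-GM (s x = y) and in ln q <= q - 1 (q = 1) *)
    set (K := / (x * y * (1 + c * cos t))).
    assert (hK : 0 < K).
    { apply Rinv_0_lt_compat, Rmult_lt_0_compat; [apply Rmult_lt_0_compat |]; assumption. }
    assert (hs : 0 < y / x) by (apply Rdiv_lt_0_compat; assumption).
    destruct (polar_inS K (y / x) t hK hs ht) as [hS hl1].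
    exists (- K * cos t), ((1 - K * (y / x)) / 2), ((1 - K / (y / x)) / 2).
    split; [exact hS | split; [exact hl1 |]].
    rewrite objective_polar by (assumption || lra).
    replace (K * (x * y) * (1 + c * cos t)) with 1 by (unfold K; field; lra).
    replace (y / x * x - y) with 0 by (field; lra).
    rewrite ln_1. field. lra.
Qed.

Definition gain_num (c t : R) : R := t * (c + cos t) - sin t * (1 + c * cos t).

Lemma gain_denom_pos c t : 0 < c < 1 -> 0 < t < PI -> 0 < t * sin t * (1 + c * cos t).
Proof.
  intros hc ht. assert (0 < sin t) by (apply sin_gt_0; lra).
  apply Rmult_lt_0_compat; [nra | apply one_add_mul_cos_pos, hc].
Qed.

Lemma is_derive_gain c t : 0 < c < 1 -> 0 < t < PI ->
  is_derive (gain c) t (gain_num c t / (t * sin t * (1 + c * cos t))).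
Proof.
  intros hc ht.
  assert (hsin : 0 < sin t) by (apply sin_gt_0; lra).
  assert (hcos := one_add_mul_cos_pos c t hc).
  unfold gain, gain_num. auto_derive; [repeat split; lra |].
  replace (c + cos t) with (c * (sin t ^ 2 + cos t ^ 2) + cos t)
    by (rewrite sin_sq_add_cos_sq; ring).
  field. repeat split; lra.
Qed.

Lemma is_derive_gain_num c t : is_derive (gain_num c) t (sin t * (2 * c * sin t - t)).
Proof.
  unfold gain_num. auto_derive; [exact I |].
  replace c with (c * (sin t ^ 2 + cos t ^ 2)) at 1 by (rewrite sin_sq_add_cos_sq; ring).
  ring.
Qed.

Lemma gain_num_PI2 c : gain_num c (PI / 2) = PI / 2 * (c - 2 / PI).
Proof.
  unfold gain_num. rewrite sin_PI2, cos_PI2. field. generalize PI_gt_3. lra.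
Qed.

Lemma mul_sin_sub_decreasing c t t' : 0 < c -> PI / 2 <= t -> t < t' -> t' <= PI ->
  2 * c * sin t' - t' < 2 * c * sin t - t.
Proof.
  intros hc h1 h2 h3.
  assert (sin t' < sin t) by (apply sin_decreasing_1; lra).
  nra.
Qed.

Lemma gain_num_decreasing c t t' : 0 < c -> PI / 2 <= t -> t < t' -> t' <= PI ->
  2 * c * sin t - t <= 0 -> gain_num c t' < gain_num c t.
Proof.
  intros hc h1 h2 h3 hslope.
  apply (lt_of_derive_neg _ (fun s => sin s * (2 * c * sin s - s)) t t' h2);
    [intros; apply is_derive_gain_num |].
  intros s hs.
  assert (0 < sin s) by (apply sin_gt_0; lra).
  assert (2 * c * sin s - s < 2 * c * sin t - t) by (apply mul_sin_sub_decreasing; lra).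
  nra.
Qed.

Lemma gain_num_pos c t : 2 / PI < c -> PI / 2 < t <= PI ->
  0 <= 2 * c * sin t - t -> 0 < gain_num c t.
Proof.
  intros hc ht hslope.
  assert (h2PI := two_div_PI_bounds).
  assert (0 < gain_num c (PI / 2)) by (rewrite gain_num_PI2; apply Rmult_lt_0_compat; lra).
  enough (gain_num c (PI / 2) < gain_num c t) by lra.
  apply (lt_of_derive_pos _ (fun s => sin s * (2 * c * sin s - s)) (PI / 2) t);
    [lra | intros; apply is_derive_gain_num |].
  intros s hs.
  assert (0 < sin s) by (apply sin_gt_0; lra).
  assert (2 * c * sin t - t < 2 * c * sin s - s) by (apply mul_sin_sub_decreasing; lra).
  nra.
Qed.

Lemma gain_num_sign c p : 2 / PI < c -> PI / 2 < p < PI -> gain_num c p = 0 ->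
  (forall t, PI / 2 < t < p -> 0 < gain_num c t) /\
  (forall t, p < t <= PI -> gain_num c t < 0).
Proof.
  intros hc hp hroot.
  assert (h2PI := two_div_PI_bounds).
  assert (hslope : 2 * c * sin p - p < 0).
  { destruct (Rlt_or_le (2 * c * sin p - p) 0) as [h | h]; [exact h |].
    generalize (gain_num_pos c p hc ltac:(lra) h). lra. }
  split.
  - intros t ht. destruct (Rle_or_lt 0 (2 * c * sin t - t)) as [h | h].
    + apply gain_num_pos; lra.
    + rewrite <- hroot. apply gain_num_decreasing; lra.
  - intros t ht. rewrite <- hroot. apply gain_num_decreasing; lra.
Qed.

Lemma gain_num_neg c t : 0 < c <= 2 / PI -> PI / 2 < t <= PI -> gain_num c t < 0.
Proof.
  intros hc ht. assert (hpi := PI_gt_3).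
  assert (hcPI : c * PI <= 2).
  { destruct hc as [_ hc]. apply (Rmult_le_compat_r PI) in hc; [| lra].
    replace (2 / PI * PI) with 2 in hc by (field; lra). exact hc. }
  apply Rlt_le_trans with (gain_num c (PI / 2)).
  - apply gain_num_decreasing; try lra. rewrite sin_PI2. nra.
  - rewrite gain_num_PI2. nra.
Qed.

Lemma gain_num_root c : 2 / PI < c < 1 -> exists p, PI / 2 < p < PI /\ gain_num c p = 0.
Proof.
  intros [hc hc1]. assert (hpi := PI_gt_3).
  assert (hcont : continuity (fun t => - gain_num c t)).
  { intro t. apply continuity_pt_filterlim, (ex_derive_continuous (fun t => - gain_num c t)).
    eexists. apply (is_derive_opp (gain_num c)), is_derive_gain_num. }
  assert (hPI2 : 0 < gain_num c (PI / 2))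
    by (rewrite gain_num_PI2; apply Rmult_lt_0_compat; lra).
  assert (hPI : gain_num c PI < 0) by (unfold gain_num; rewrite sin_PI, cos_PI; nra).
  destruct (IVT (fun t => - gain_num c t) (PI / 2) PI hcont ltac:(lra) ltac:(lra) ltac:(lra))
    as [p [hp hroot]].
  exists p. split; [| lra].
  destruct hp as [[h1 | h1] [h2 | h2]]; subst; split; lra.
Qed.

Lemma gain_PI2 c : gain c (PI / 2) = 0.
Proof.
  unfold gain. rewrite sin_PI2, cos_PI2, Rmult_0_r, Rplus_0_r, ln_1.
  replace (2 * (PI / 2)) with PI by field. ring.
Qed.

Lemma gain_le_at_root c p t : 2 / PI < c < 1 -> PI / 2 < p < PI -> gain_num c p = 0 ->
  PI / 2 < t < PI -> gain c t <= gain c p.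
Proof.
  intros hc hp hroot ht.
  assert (h2PI := two_div_PI_bounds).
  destruct (gain_num_sign c p ltac:(lra) hp hroot) as [hinc hdec].
  assert (hI : forall s, Rmin t p <= s <= Rmax t p -> PI / 2 < s < PI).
  { intros s [h1 h2]. split.
    - apply Rlt_le_trans with (Rmin t p); [apply Rmin_glb_lt |]; lra.
    - apply Rle_lt_trans with (Rmax t p); [| apply Rmax_lub_lt]; lra. }
  assert (hmin := Rmin_r t p). assert (hmax := Rmax_r t p).
  apply (le_of_derive_sign_change _ (fun s => gain_num c s / (s * sin s * (1 + c * cos s)))
    (Rmin t p) p (Rmax t p)); [lra | | | | split; [apply Rmin_l | apply Rmax_l]].
  - intros s hs. specialize (hI s hs). apply is_derive_gain; lra.
  - intros s hs. assert (PI / 2 < s < PI) by (apply hI; lra).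
    apply Rdiv_lt_0_compat; [apply hinc | apply gain_denom_pos]; lra.
  - intros s hs. assert (PI / 2 < s < PI) by (apply hI; lra).
    apply Rdiv_neg_pos; [apply hdec | apply gain_denom_pos]; lra.
Qed.

Lemma gain_nonpos c t : 0 < c <= 2 / PI -> PI / 2 < t < PI -> gain c t <= 0.
Proof.
  intros hc ht.
  assert (h2PI := two_div_PI_bounds).
  rewrite <- (gain_PI2 c).
  apply (le_of_derive_sign_change _ (fun s => gain_num c s / (s * sin s * (1 + c * cos s)))
    (PI / 2) (PI / 2) t); [lra | | intros; lra | | lra].
  - intros s hs. apply is_derive_gain; lra.
  - intros s hs. apply Rdiv_neg_pos; [apply gain_num_neg | apply gain_denom_pos]; lra.
Qed.

Lemma gain_near_PI2 c eps : 0 < c < 1 -> 0 < eps ->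
  exists t, PI / 2 < t < PI /\ - eps < gain c t.
Proof.
  intros hc heps. assert (hpi := PI_gt_3).
  assert (hcont : continuity_pt (gain c) (PI / 2)).
  { apply continuity_pt_filterlim, (ex_derive_continuous (gain c)).
    eexists. apply is_derive_gain; [exact hc | lra]. }
  destruct (proj1 (continuity_pt_locally _ _) hcont (mkposreal eps heps)) as [d hd].
  set (t := PI / 2 + Rmin (d / 2) (PI / 4)).
  assert (hmin : 0 < Rmin (d / 2) (PI / 4) <= d / 2).
  { split; [apply Rmin_pos; generalize (cond_pos d); lra | apply Rmin_l]. }
  assert (Rmin (d / 2) (PI / 4) <= PI / 4) by apply Rmin_r.
  exists t. split; [unfold t; lra |].
  assert (hball : Rabs (gain c t - gain c (PI / 2)) < eps).
  { apply hd. unfold ball; simpl. unfold AbsRing_ball, abs, minus, plus, opp; simpl.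
    unfold t. rewrite Rabs_pos_eq; lra. }
  rewrite gain_PI2, Rminus_0_r in hball. apply Rabs_def2 in hball. lra.
Qed.

Lemma gain_eq_ln c t : 0 < c < 1 -> 0 < t < PI ->
  gain c t = ln (PI * sin t / (2 * t * (1 + c * cos t))).
Proof.
  intros hc ht.
  assert (0 < sin t) by (apply sin_gt_0; lra).
  assert (hcos := one_add_mul_cos_pos c t hc).
  unfold gain. rewrite ln_div, !ln_mult; try lra; apply Rmult_lt_0_compat; lra.
Qed.

Lemma acos_neg_inv b : 1 < b ->
  PI / 2 < acos (-1 / b) < PI /\ cos (acos (-1 / b)) = -1 / b /\
  sqrt (b ^ 2 - 1) = b * sin (acos (-1 / b)).
Proof.
  intros hb.
  assert (hinv : -1 < -1 / b < 0).
  { split; [apply (Rmult_lt_reg_r b) | apply Rdiv_neg_pos]; try lra.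
    field_simplify; lra. }
  set (p := acos (-1 / b)).
  assert (hcos : cos p = -1 / b) by (apply cos_acos; lra).
  assert (hp : PI / 2 < p < PI).
  { destruct (acos_bound_lt (-1 / b)) as [h0 hPI]; [lra |]. fold p in h0, hPI.
    split; [| exact hPI].
    destruct (Rlt_or_le (PI / 2) p) as [h | h]; [exact h |].
    assert (0 <= cos p) by (apply cos_ge_0; lra). lra. }
  assert (hsin : 0 < sin p) by (apply sin_gt_0; lra).
  repeat split; try lra.
  rewrite <- (sqrt_pow2 (b * sin p)) by nra. f_equal.
  replace (b ^ 2) with (b ^ 2 * (sin p ^ 2 + cos p ^ 2)) at 1
    by (rewrite sin_sq_add_cos_sq; ring).
  rewrite hcos. field. lra.
Qed.

Lemma beta0_eq_iff theta b : 0 < cos theta < 1 -> 1 < b ->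
  beta0_eq theta b <-> gain_num (cos theta) (acos (-1 / b)) = 0.
Proof.
  intros hc hb.
  destruct (acos_neg_inv b hb) as [hp [hcos hsqrt]].
  unfold beta0_eq. rewrite hsqrt.
  set (p := acos (-1 / b)) in *. set (c := cos theta) in *.
  assert (hsin : 0 < sin p) by (apply sin_gt_0; lra).
  replace (gain_num c p) with ((p * (b * c - 1) - (b - c) * sin p) / b)
    by (unfold gain_num; rewrite hcos; field; lra).
  destruct (Req_dec (b * c - 1) 0) as [h | h].
  (* the degenerate case b c = 1 satisfies neither side; note x / 0 = 0 *)
  - rewrite h, Rmult_0_r, Rdiv_0_r. split; intro H; [lra |].
    exfalso. apply (Rmult_eq_compat_r b) in H. field_simplify in H; [| lra].
    assert (0 < (b - c) * sin p) by (apply Rmult_lt_0_compat; lra). lra.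
  - split; intro H.
    + rewrite H at 1. field. lra.
    + apply (Rmult_eq_compat_r b) in H. field_simplify in H; [| lra].
      apply (Rmult_eq_reg_r (b * c - 1)); [| exact h].
      field_simplify; lra.
Qed.

Lemma gain_at_root c b : 0 < c < 1 -> 1 < b -> gain_num c (acos (-1 / b)) = 0 ->
  gain c (acos (-1 / b)) = ln (PI * b * (b * c - 1) / (2 * (b - c) ^ 2)).
Proof.
  intros hc hb hroot.
  destruct (acos_neg_inv b hb) as [hp [hcos _]].
  set (p := acos (-1 / b)) in *.
  assert (hden := one_add_mul_cos_pos c p hc).
  assert (hsin : sin p = p * (c + cos p) / (1 + c * cos p)).
  { unfold gain_num in hroot. apply (Rmult_eq_reg_r (1 + c * cos p)); [| lra].
    unfold Rdiv. rewrite Rmult_assoc, Rinv_l by lra. lra. }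
  rewrite gain_eq_ln by lra. f_equal.
  rewrite hsin. rewrite hcos in hden |- *. field. repeat split; lra.
Qed.

Lemma beta0_exists_unique theta : 2 / PI < cos theta < 1 ->
  exists! b, 1 < b /\ beta0_eq theta b.
Proof.
  intros hc.
  assert (h2PI := two_div_PI_bounds).
  assert (hc0 : 0 < cos theta < 1) by lra.
  destruct (gain_num_root _ hc) as [p [hp hroot]].
  destruct (gain_num_sign _ p (proj1 hc) hp hroot) as [hinc hdec].
  assert (hsin : 0 < sin p) by (apply sin_gt_0; lra).
  assert (hcos : -1 < cos p < 0).
  { split; [generalize (sin_sq_add_cos_sq p); nra | apply cos_lt_0; lra]. }
  exists (-1 / cos p). split.
  - assert (hb : 1 < -1 / cos p).
    { apply (Rmult_lt_reg_r (- cos p)); [lra |].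
      replace (-1 / cos p * - cos p) with 1 by (field; lra). lra. }
    split; [exact hb |]. apply beta0_eq_iff; [exact hc0 | exact hb |].
    replace (-1 / (-1 / cos p)) with (cos p) by (field; lra).
    rewrite acos_cos by lra. exact hroot.
  - intros b [hb hbeta]. apply beta0_eq_iff in hbeta; [| exact hc0 | exact hb].
    destruct (acos_neg_inv b hb) as [hq [hcosq _]].
    assert (hpq : acos (-1 / b) = p).
    { destruct (Rtotal_order (acos (-1 / b)) p) as [h | [h | h]]; [| exact h |].
      - generalize (hinc _ (conj (proj1 hq) h)). lra.
      - generalize (hdec _ (conj h (Rlt_le _ _ (proj2 hq)))). lra. }
    rewrite <- hpq, hcosq. field. lra.
Qed.

Theorem lemma9 (x y theta : R) (hx : 0 < x) (hy : 0 < y)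
  (ht0 : 0 < theta) (ht1 : theta < PI / 2) :
  (theta < acos (2 / PI) ->
     (exists! b : R, 1 < b /\ beta0_eq theta b) /\
     (forall b : R, 1 < b -> beta0_eq theta b ->
        LamStarPlus (x * y * cos theta) (x ^ 2) (y ^ 2) =
        Finite (x ^ 2 / 2 + y ^ 2 / 2 - 1 - ln (x * y)
                + ln (PI * b * (b * cos theta - 1) / (2 * (b - cos theta) ^ 2))))) /\
  (acos (2 / PI) <= theta ->
     LamStarPlus (x * y * cos theta) (x ^ 2) (y ^ 2) =
     Finite (x ^ 2 / 2 + y ^ 2 / 2 - 1 - ln (x * y))).
Proof.
  assert (hc : 0 < cos theta < 1).
  { split; [apply cos_gt_0 | rewrite <- cos_0; apply cos_decreasing_1]; lra. }
  assert (h2PI := two_div_PI_bounds).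
  assert (hacos := acos_bound (2 / PI)).
  assert (hcos2 : cos (acos (2 / PI)) = 2 / PI) by (apply cos_acos; lra).
  split.
  - intro hlt.
    assert (hc2 : 2 / PI < cos theta) by (rewrite <- hcos2; apply cos_decreasing_1; lra).
    split; [apply beta0_exists_unique; lra |].
    intros b hb hbeta. apply beta0_eq_iff in hbeta; [| exact hc | exact hb].
    destruct (acos_neg_inv b hb) as [hp _].
    rewrite <- gain_at_root by assumption.
    apply LamStarPlus_eq_base_add_sup; [exact hx | exact hy | exact hc | |].
    + intros t ht. apply gain_le_at_root; [lra | exact hp | exact hbeta | exact ht].
    + intros eps heps. exists (acos (-1 / b)). split; [exact hp | lra].
  - intro hge.
    assert (hc2 : cos theta <= 2 / PI).
    { rewrite <- hcos2. destruct hge as [h | ->]; [left; apply cos_decreasing_1 | right]; lra. }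
    rewrite <- (Rplus_0_r (_ - ln (x * y))).
    apply LamStarPlus_eq_base_add_sup; [exact hx | exact hy | exact hc | |].
    + intros t ht. apply gain_nonpos; lra.
    + intros eps heps. rewrite Rminus_0_l. apply gain_near_PI2; assumption.
Qed.
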